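(* Assume $\Sigma_n$ and $V_n$ are invertible and set $\mathcal{D}_n^{\Sigma} := \|\Sigma_n^{-1/2}\widehat{\Sigma}_n\Sigma_n^{-1/2} - I_d\|_{\mathrm{op}}$. If $\mathcal{D}_n^{\Sigma} < 1$, then (deterministically) \[ \Big\|\widehat{\beta} - \beta - \frac{1}{n}\sum_{i=1}^n \psi_i \Big\|_{\Sigma_n V^{-1}_n\Sigma_n} \le \kappa(\Sigma_n^{-1/2}V_n^{1/2})\frac{\mathcal{D}_n^{\Sigma}}{1 - \mathcal{D}_n^{\Sigma}}\Big\|\frac{1}{n}\sum_{i=1}^n \psi_i \Big\|_{\Sigma_n V^{-1}_n\Sigma_n}, \] where $\psi_i := \Sigma^{-1}_nX_i(Y_i - X_i^{\top}\beta)\in\mathbb{R}^d$, $i=1,\dots,n$.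
   Context: Let $(X_1,Y_1),\dots,(X_n,Y_n)$ be random elements of $\mathbb{R}^d\times\mathbb{R}$ (not necessarily independent or identically distributed) with finite second moments. Define $\Sigma_n := n^{-1}\sum_{i=1}^n\mathbb{E}[X_iX_i^\top]$, $\Gamma_n := n^{-1}\sum_{i=1}^n\mathbb{E}[X_iY_i]$, the projection parameter $\beta := \Sigma_n^{-1}\Gamma_n$, $\widehat{\Sigma}_n := n^{-1}\sum_{i=1}^n X_iX_i^\top$, $\widehat{\Gamma}_n := n^{-1}\sum_{i=1}^n X_iY_i$, and the OLS estimator $\widehat\beta := \widehat{\Sigma}_n^{-1}\widehat{\Gamma}_n$ (well defined when $\widehat\Sigma_n$ is invertible). Let $V_n := \mathrm{Var}\big(n^{-1}\sum_{i=1}^n X_i(Y_i - X_i^\top\beta)\big)$. For a positive definite $A$ and $x\in\mathbb{R}^d$, $\|x\|_A := \sqrt{x^\top A x}$; for a nonsingular matrix $A$, $\kappa(A) := \|A^{-1}\|_{\mathrm{op}}\|A\|_{\mathrm{op}}$, where $\|\cdot\|_{\mathrm{op}}$ is the operator norm. *)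

From HB Require Import structures.
From mathcomp Require Import all_boot all_order all_algebra.
From mathcomp Require Import all_classical all_reals all_analysis.
Set Implicit Arguments. Unset Strict Implicit. Unset Printing Implicit Defensive.
Import Order.TTheory GRing.Theory Num.Theory.
Local Open Scope ring_scope.
Local Open Scope classical_set_scope.

Section LinAlg.
Variable R : realType.

Definition eucl (m : nat) (x : 'cV[R]_m) : R := Num.sqrt (\sum_i x i 0 ^+ 2).

Definition opnorm (m k : nat) (A : 'M[R]_(m, k)) : R :=
  sup [set eucl (A *m x) | x in [set x : 'cV[R]_k | eucl x = 1]].

Definition kappa (m : nat) (A : 'M[R]_m) : R := opnorm (invmx A) * opnorm A.

Definition psdmx (m : nat) (S : 'M[R]_m) : Prop :=
  S^T = S /\ forall x : 'cV[R]_m, 0 <= (x^T *m S *m x) 0 0.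

Definition msqrt (m : nat) (A : 'M[R]_m) : 'M[R]_m :=
  xget 0 [set S : 'M[R]_m | psdmx S /\ S *m S = A].

Definition minvsqrt (m : nat) (A : 'M[R]_m) : 'M[R]_m := invmx (msqrt A).

Definition anorm (m : nat) (A : 'M[R]_m) (x : 'cV[R]_m) : R :=
  Num.sqrt ((x^T *m A *m x) 0 0).

End LinAlg.

Section Regression.
Context {dT : measure_display} {T : measurableType dT} {R : realType}.
Variable P : probability T R.
Variables (n dim : nat).
Variables (X : 'I_n -> T -> 'cV[R]_dim) (Y : 'I_n -> T -> R).

Definition Ex (f : T -> R) : R := fine ('E_P[f])%E.

Definition Sigma_n : 'M[R]_dim :=
  n%:R^-1 *: \sum_(i < n) \matrix_(j, k) Ex (fun w => X i w j 0 * X i w k 0).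

Definition Gamma_n : 'cV[R]_dim :=
  n%:R^-1 *: \sum_(i < n) \col_j Ex (fun w => X i w j 0 * Y i w).

Definition beta_proj : 'cV[R]_dim := invmx Sigma_n *m Gamma_n.

Definition Sigma_hat (w : T) : 'M[R]_dim :=
  n%:R^-1 *: \sum_(i < n) (X i w *m (X i w)^T).

Definition Gamma_hat (w : T) : 'cV[R]_dim :=
  n%:R^-1 *: \sum_(i < n) (Y i w *: X i w).

Definition beta_hat (w : T) : 'cV[R]_dim := invmx (Sigma_hat w) *m Gamma_hat w.

Definition resid (i : 'I_n) (w : T) : R := Y i w - ((X i w)^T *m beta_proj) 0 0.

Definition Zbar (w : T) : 'cV[R]_dim :=
  n%:R^-1 *: \sum_(i < n) (resid i w *: X i w).

Definition V_n : 'M[R]_dim :=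
  \matrix_(j, k) (Ex (fun w => Zbar w j 0 * Zbar w k 0)
                  - Ex (fun w => Zbar w j 0) * Ex (fun w => Zbar w k 0)).

Definition psi (i : 'I_n) (w : T) : 'cV[R]_dim :=
  resid i w *: (invmx Sigma_n *m X i w).

Definition psibar (w : T) : 'cV[R]_dim := n%:R^-1 *: \sum_(i < n) psi i w.

Definition DSigma (w : T) : R :=
  opnorm (minvsqrt Sigma_n *m Sigma_hat w *m minvsqrt Sigma_n - 1%:M).

End Regression.

From HB Require Import structures.
From mathcomp Require Import all_boot all_order all_algebra.
From mathcomp Require Import all_classical all_reals all_analysis.
From mathcomp Require Import ring lra.
From mathcomp Require complex.
Import Order.TTheory GRing.Theory Num.Theory.
Set Implicit Arguments. Unset Strict Implicit. Unset Printing Implicit Defensive.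
Local Open Scope ring_scope.

(* Write S := Sigma_n^{1/2}, W := V_n^{1/2}, A := S^{-1} Sigma_hat S^{-1} and
   D := ||A - I||_op < 1.  Since Gamma_hat - Sigma_hat beta = Zbar, we have
   beta_hat - beta = Sigma_hat^{-1} Zbar and psibar = Sigma_n^{-1} Zbar, and the
   norm ||.||_{Sigma V^{-1} Sigma} is the Euclidean norm after applying W^{-1} Sigma.
   With B := S^{-1} W and v := W^{-1} Zbar the error reads B^{-1} (A^{-1} - I) B v,
   so the claim follows from ||B^{-1}|| ||B|| = kappa(B) and the Neumann-type bound
   ||A^{-1} - I||_op <= D / (1 - D), valid whenever ||A - I||_op < 1. *)

Section EuclideanNorm.
Variable R : realType.
Implicit Types (m : nat).

Definition sqnorm m (x : 'cV[R]_m) : R := \sum_i x i 0 ^+ 2.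

Definition dotv m (u v : 'cV[R]_m) : R := \sum_i u i 0 * v i 0.

Lemma sqnorm_ge0 m (x : 'cV[R]_m) : 0 <= sqnorm x.
Proof. by apply: sumr_ge0 => i _; rewrite sqr_ge0. Qed.

Lemma sqnorm_gt0 m (x : 'cV[R]_m) : x != 0 -> 0 < sqnorm x.
Proof.
move=> x0; rewrite lt_def sqnorm_ge0 andbT; apply: contra x0 => /eqP.
move/psumr_eq0P => /(_ (fun i _ => sqr_ge0 _)) x_0.
apply/eqP/matrixP => i j; rewrite ord1 mxE.
by apply/eqP; rewrite -sqrf_eq0 x_0.
Qed.

Lemma sqnormE m (x : 'cV[R]_m) : (x^T *m x) 0 0 = sqnorm x.
Proof. by rewrite mxE; apply: eq_bigr => i _; rewrite mxE expr2. Qed.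

Lemma eucl_ge0 m (x : 'cV[R]_m) : 0 <= eucl x.
Proof. exact: sqrtr_ge0. Qed.

Lemma eucl_sqr m (x : 'cV[R]_m) : eucl x ^+ 2 = sqnorm x.
Proof. by rewrite sqr_sqrtr // sqnorm_ge0. Qed.

Lemma eucl_gt0 m (x : 'cV[R]_m) : x != 0 -> 0 < eucl x.
Proof. by move=> x0; rewrite sqrtr_gt0 sqnorm_gt0. Qed.

Lemma euclZ m (c : R) (x : 'cV[R]_m) : eucl (c *: x) = `|c| * eucl x.
Proof.
rewrite /eucl -sqrtr_sqr -sqrtrM ?sqr_ge0 // mulr_sumr.
by congr Num.sqrt; apply: eq_bigr => i _; rewrite mxE exprMn.
Qed.

Lemma eucl0 m : eucl (0 : 'cV[R]_m) = 0.
Proof. by rewrite -(scale0r (0 : 'cV[R]_m)) euclZ normr0 mul0r. Qed.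

Lemma euclN m (x : 'cV[R]_m) : eucl (- x) = eucl x.
Proof. by rewrite -scaleN1r euclZ normrN normr1 mul1r. Qed.

(* Cauchy-Schwarz, from the nonnegativity of t |-> |t u - v|^2 at its minimum *)
Lemma dotv_sqr_le m (u v : 'cV[R]_m) : dotv u v ^+ 2 <= sqnorm u * sqnorm v.
Proof.
have [u0|u0] := eqVneq u 0.
  have -> : dotv u v = 0 by rewrite /dotv big1 // => i _; rewrite u0 mxE mul0r.
  by rewrite expr2 mul0r mulr_ge0 ?sqnorm_ge0.
have uP := sqnorm_gt0 u0; pose t := dotv u v / sqnorm u.
have : 0 <= sqnorm (t *: u - v) := sqnorm_ge0 _.
have -> : sqnorm (t *: u - v) = t ^+ 2 * sqnorm u - 2 * t * dotv u v + sqnorm v.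
  rewrite /sqnorm /dotv !mulr_sumr -sumrB -big_split /=.
  by apply: eq_bigr => i _; rewrite !mxE; ring.
have -> : t ^+ 2 * sqnorm u - 2 * t * dotv u v = - (dotv u v ^+ 2 / sqnorm u).
  by rewrite /t; field; rewrite gt_eqF.
by rewrite addrC subr_ge0 ler_pdivrMr // mulrC.
Qed.

Lemma eucl_triangle m (u v : 'cV[R]_m) : eucl (u + v) <= eucl u + eucl v.
Proof.
rewrite -(ler_pXn2r (_ : 0 < 2)%N) ?nnegrE ?addr_ge0 ?eucl_ge0 // sqrrD !eucl_sqr.
have -> : sqnorm (u + v) = sqnorm u + 2 * dotv u v + sqnorm v.
  rewrite /sqnorm /dotv mulr_sumr -!big_split /=.
  by apply: eq_bigr => i _; rewrite mxE; ring.
suff : dotv u v <= eucl u * eucl v by rewrite mulr2n; lra.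
apply: le_trans (ler_norm _) _.
rewrite -(ler_pXn2r (_ : 0 < 2)%N) ?nnegrE ?mulr_ge0 ?eucl_ge0 //.
by rewrite exprMn !eucl_sqr real_normK ?num_real // dotv_sqr_le.
Qed.

End EuclideanNorm.

Section OperatorNorm.
Variable R : realType.
Implicit Types (m k : nat).

(* opnorm is a genuine supremum: on the unit sphere |A x|^2 <= sum_i (sum_j |A i j|)^2 *)
Lemma opnorm_has_ubound m k (A : 'M[R]_(m, k)) :
  has_ubound [set eucl (A *m x) | x in [set x : 'cV[R]_k | eucl x = 1]].
Proof.
have coord_le1 (x : 'cV[R]_k) j : eucl x = 1 -> `|x j 0| <= 1.
  move=> x1; rewrite -(ler_pXn2r (_ : 0 < 2)%N) ?nnegrE // real_normK ?num_real //.
  rewrite -x1 eucl_sqr /sqnorm (bigD1 j) //= lerDl.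
  by apply: sumr_ge0 => i _; exact: sqr_ge0.
exists (Num.sqrt (\sum_i (\sum_j `|A i j|) ^+ 2)) => _ [x /= x1 <-].
rewrite ler_sqrt; last by apply: sumr_ge0 => i _; exact: sqr_ge0.
apply: ler_sum => i _; rewrite -real_normK ?num_real //.
rewrite ler_sqr ?nnegrE ?normr_ge0 ?sumr_ge0 // mxE.
apply: le_trans (ler_norm_sum _ _ _) _; apply: ler_sum => j _.
by rewrite normrM ler_piMr // coord_le1.
Qed.

(* the defining inequality of the operator norm, by rescaling x to the unit sphere *)
Lemma opnorm_bound m k (A : 'M[R]_(m, k)) x : eucl (A *m x) <= opnorm A * eucl x.
Proof.
have [->|x0] := eqVneq x 0; first by rewrite mulmx0 !eucl0 mulr0.
have xP := eucl_gt0 x0; pose u := (eucl x)^-1 *: x.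
have u1 : eucl u = 1 by rewrite euclZ ger0_norm ?invr_ge0 ?eucl_ge0 // mulVf ?gt_eqF.
have : eucl (A *m u) <= opnorm A.
  apply: sup_upper_bound; last by exists u.
  by split; [exists (eucl (A *m u)), u | exact: opnorm_has_ubound].
rewrite -scalemxAr euclZ ger0_norm ?invr_ge0 ?eucl_ge0 // ler_pdivrMl //.
by rewrite mulrC.
Qed.

(* in dimension 0 the sphere is empty and sup set0 = 0 *)
Lemma opnorm_ge0 m k (A : 'M[R]_(m, k)) : 0 <= opnorm A.
Proof.
case: k A => [|k] A.
  rewrite /opnorm [X in sup X](_ : _ = set0) ?sup0 //.
  apply/seteqP; split=> // _ [x /= x1 _]; move: x1.
  by rewrite /eucl /sqnorm big_ord0 sqrtr0 => /eqP; rewrite eq_sym oner_eq0.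
pose x : 'cV[R]_k.+1 := const_mx 1.
have x0 : x != 0.
  by apply/eqP => /matrixP/(_ 0 0); rewrite !mxE => /eqP; rewrite oner_eq0.
rewrite -(pmulr_lge0 _ (eucl_gt0 x0)).
exact: le_trans (eucl_ge0 _) (opnorm_bound A x).
Qed.

End OperatorNorm.

Section PerturbationOfIdentity.
Variable R : realType.
Variable n : nat.
Implicit Types (M : 'M[R]_n) (x : 'cV[R]_n).

Lemma unitmx_of_lower_bound M (c : R) :
  0 < c -> (forall x, c * eucl x <= eucl (M *m x)) -> M \in unitmx.
Proof.
move=> c0 lowM; apply/negPn/negP; rewrite unitmxE unitfE negbK -det_tr.
case/det0P => v v0 vM0; have := lowM v^T.
have -> : M *m v^T = 0 by rewrite -[M]trmxK -trmx_mul vM0 trmx0.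
by rewrite eucl0 pmulr_rle0 // leNgt eucl_gt0 // trmx_eq0.
Qed.

Section NearIdentity.
Variable M : 'M[R]_n.
Let D := opnorm (M - 1%:M).
Hypothesis D_lt1 : D < 1.

(* |x| <= |M x| + |(1 - M) x| <= |M x| + D |x| *)
Lemma near_identity_lower_bound x : (1 - D) * eucl x <= eucl (M *m x).
Proof.
have := eucl_triangle (M *m x) ((1%:M - M) *m x).
rewrite -mulmxDl addrC subrK mul1mx -opprB mulNmx euclN.
have := opnorm_bound (M - 1%:M) x; rewrite -/D mulrBl mul1r; lra.
Qed.

Lemma near_identity_unitmx : M \in unitmx.
Proof.
apply: (unitmx_of_lower_bound (c := 1 - D)); first by rewrite subr_gt0.
exact: near_identity_lower_bound.
Qed.

(* Neumann-type bound: M^{-1} - 1 = -(M - 1) M^{-1} and |M^{-1} y| <= |y| / (1 - D) *)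
Lemma near_identity_inv_bound y :
  eucl ((invmx M - 1%:M) *m y) <= D / (1 - D) * eucl y.
Proof.
have Mu := near_identity_unitmx; pose x := invmx M *m y.
have Mx : M *m x = y by rewrite mulKVmx.
have -> : (invmx M - 1%:M) *m y = - ((M - 1%:M) *m x).
  by rewrite !mulmxBl !mul1mx Mx opprB.
rewrite euclN; apply: le_trans (opnorm_bound _ _) _; rewrite -/D.
have x_le : eucl x <= eucl y / (1 - D).
  by rewrite ler_pdivlMr ?subr_gt0 // mulrC -Mx near_identity_lower_bound.
apply: le_trans (ler_wpM2l (opnorm_ge0 _) x_le) _.
by rewrite mulrA mulrAC.
Qed.

End NearIdentity.
End PerturbationOfIdentity.

Section PsdCone.
Variable R : realType.
Variable m : nat.
Implicit Types (A B : 'M[R]_m).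

Lemma psdmx_gram p (B : 'M[R]_(p, m)) : psdmx (B^T *m B).
Proof.
split=> [|x]; first by rewrite trmx_mul trmxK.
by rewrite mulmxA -trmx_mul -mulmxA sqnormE sqnorm_ge0.
Qed.

Lemma psdmx0 : psdmx (0 : 'M[R]_m).
Proof. by split=> [|x]; rewrite ?trmx0 // mulmx0 mul0mx mxE. Qed.

Lemma psdmxD A B : psdmx A -> psdmx B -> psdmx (A + B).
Proof.
move=> [AT Apsd] [BT Bpsd]; split=> [|x]; first by rewrite linearD /= AT BT.
by rewrite mulmxDr mulmxDl mxE addr_ge0.
Qed.

Lemma psdmxZ (c : R) A : 0 <= c -> psdmx A -> psdmx (c *: A).
Proof.
move=> c0 [AT Apsd]; split=> [|x]; first by rewrite linearZ /= AT.
by rewrite -scalemxAr -scalemxAl mxE mulr_ge0.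
Qed.

End PsdCone.

Lemma interp_poly (F : fieldType) (s : seq F) (f : F -> F) :
  exists p : {poly F}, {in s, forall x, p.[x] = f x}.
Proof.
elim: s => [|y s [p Hp]]; first by exists 0.
have [ys|yns] := boolP (y \in s).
  by exists p => x; rewrite inE => /orP[/eqP->|/Hp//]; exact: Hp.
pose q := \prod_(z <- s) ('X - z%:P).
have qy : q.[y] != 0.
  rewrite /q horner_prod prodf_seq_neq0; apply/allP => z zs /=.
  by rewrite hornerXsubC subr_eq0; apply: contraNneq yns => ->.
exists (p + ((f y - p.[y]) / q.[y]) *: q) => x; rewrite inE hornerD hornerZ.
case/orP=> [/eqP->|xs]; first by rewrite mulfVK // addrC subrK.
have -> : q.[x] = 0.
  apply/eqP; rewrite /q horner_prod prodf_seq_eq0; apply/hasP; exists x => //.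
  by rewrite hornerXsubC subrr eqxx.
by rewrite mulr0 addr0 Hp.
Qed.

Lemma horner_mx_tr (F : comNzRingType) n (A : 'M[F]_n.+1) p :
  (horner_mx A p)^T = horner_mx A^T p.
Proof.
elim/poly_ind: p => [|p c IH]; first by rewrite !rmorph0 trmx0.
rewrite !(rmorphD, rmorphM) /= !(horner_mx_X, horner_mx_C) linearD /= tr_scalar_mx.
congr (_ + _); rewrite -IH.
have := comm_horner_mx2 A p 'X; rewrite horner_mx_X => ->.
by rewrite [LHS]trmx_mul.
Qed.

(* The spectral theorem is only
   available over algebraically closed fields, so we diagonalize A over R[i]:
   A = P^{-1} diag(r) P with r real, and r >= 0 because the real and imaginary
   parts of the rows of P are real eigenvectors of A.  A polynomial q with
   q(r_k) = r_k^{1/4} gives a real symmetric T := q(A), and T^T T is a PSD square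
   root of A. *)
Module PsdSqrt.
Import complex.
Section Sqrt.
Variable R : realType.
Local Notation C := (R[i]).
Local Notation toC := (real_complex R).

Lemma map_Re_mulmx m k (u : 'rV[C]_m) (A : 'M[R]_(m, k)) :
  map_mx (@Re R) (u *m map_mx toC A) = map_mx (@Re R) u *m A.
Proof.
apply/rowP => j; rewrite !mxE raddf_sum; apply: eq_bigr => i _.
by rewrite !mxE; case: (u 0 i) => a b /=; rewrite mulr0 subr0.
Qed.

Lemma map_Im_mulmx m k (u : 'rV[C]_m) (A : 'M[R]_(m, k)) :
  map_mx (@Im R) (u *m map_mx toC A) = map_mx (@Im R) u *m A.
Proof.
apply/rowP => j; rewrite !mxE raddf_sum; apply: eq_bigr => i _.
by rewrite !mxE; case: (u 0 i) => a b /=; rewrite mulr0 add0r.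
Qed.

Lemma real_eigen_ge0 m (A : 'M[R]_m) (a : 'rV[R]_m) (r : R) :
  (forall x : 'cV[R]_m, 0 <= (x^T *m A *m x) 0 0) -> a != 0 ->
  a *m A = r *: a -> 0 <= r.
Proof.
move=> Apsd a0 aA; have := Apsd a^T; rewrite trmxK aA -scalemxAl mxE.
rewrite -[a in a *m _]trmxK sqnormE pmulr_lge0 // sqnorm_gt0 //.
by apply: contra a0 => /eqP/(congr1 trmx); rewrite trmxK trmx0 => ->.
Qed.

Lemma psd_eigen_ge0 m (A : 'M[R]_m) (u : 'rV[C]_m) (r : R) :
  (forall x : 'cV[R]_m, 0 <= (x^T *m A *m x) 0 0) -> u != 0 ->
  u *m map_mx toC A = toC r *: u -> 0 <= r.
Proof.
move=> Apsd u0 uA.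
have part_eigen (f : C -> R) : map_mx f (toC r *: u) = r *: map_mx f u ->
    map_mx f (u *m map_mx toC A) = map_mx f u *m A ->
    map_mx f u != 0 -> 0 <= r.
  by move=> fZ fM fu0; apply: (real_eigen_ge0 Apsd fu0); rewrite -fM uA fZ.
have ReZ : map_mx (@Re R) (toC r *: u) = r *: map_mx (@Re R) u.
  by apply/rowP => j; rewrite !mxE; case: (u 0 j) => a b /=; rewrite mul0r subr0.
have ImZ : map_mx (@Im R) (toC r *: u) = r *: map_mx (@Im R) u.
  by apply/rowP => j; rewrite !mxE; case: (u 0 j) => a b /=; rewrite mul0r addr0.
have [Re0|] := eqVneq (map_mx (@Re R) u) 0; last first.
  exact: part_eigen ReZ (map_Re_mulmx u A).
have [Im0|] := eqVneq (map_mx (@Im R) u) 0; last first.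
  exact: part_eigen ImZ (map_Im_mulmx u A).
case/eqP: u0; apply/rowP => j.
move/rowP/(_ j): Re0; move/rowP/(_ j): Im0; rewrite !mxE.
by case: (u 0 j) => a b /= -> ->.
Qed.

Lemma real_sym_spectral n (A : 'M[R]_n) : A^T = A ->
  (forall x : 'cV[R]_n, 0 <= (x^T *m A *m x) 0 0) ->
  exists (P : 'M[C]_n) (r : 'I_n -> R), [/\ P \in unitmx, forall k, 0 <= r k &
    map_mx toC A = invmx P *m diag_mx (\row_k toC (r k)) *m P].
Proof.
move=> AT Apsd; pose Ac := map_mx toC A.
have Aherm : Ac \is hermsymmx.
  apply/is_hermitianmxP; rewrite expr0 scale1r; apply/matrixP => i j.
  by rewrite !mxE -[in LHS]AT mxE; exact/esym/conjc_real.
have /orthomx_spectralP AcE := hermitian_normalmx Aherm.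
have dR := hermitian_spectral_diag_real Aherm.
move: AcE dR; set P := spectralmx Ac; set d := spectral_diag Ac => AcE dR.
have Pu : P \in unitmx := spectral_unit Ac.
pose r k := Re (d 0 k).
have dE : d = \row_k toC (r k).
  by apply/rowP => k; rewrite mxE RRe_real //; exact: (mxOverP dR).
exists P, r; split=> [//|k|]; last by rewrite -dE.
apply: (@psd_eigen_ge0 _ A (row k P)) => //.
  apply/eqP => Pk0; have /rowP/(_ k) := row_mul k P (invmx P).
  by rewrite Pk0 mul0mx (mulmxV Pu) !mxE eqxx => /eqP; rewrite oner_eq0.
rewrite -row_mul -/Ac AcE !mulmxA (mulmxV Pu) mul1mx mul_diag_mx.
by apply/rowP => j; rewrite !mxE dE mxE.
Qed.

Lemma psd_sqrt_exists n (A : 'M[R]_n) : psdmx A -> exists S, psdmx S /\ S *m S = A.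
Proof.
case: n A => [|n] A [AT Apsd].
  by exists 0; split; [exact: psdmx0 | apply/matrixP => -[]].
have [P [r [Pu r_ge0 AcE]]] := real_sym_spectral AT Apsd.
have calcE p : map_mx toC (horner_mx A p)
    = invmx P *m diag_mx (\row_k toC p.[r k]) *m P.
  rewrite map_horner_mx AcE horner_mx_uconjC // horner_mx_diag.
  by congr (_ *m diag_mx _ *m _); apply/rowP => k; rewrite !mxE horner_map.
have [q qE] :=
  interp_poly [seq r k | k <- enum 'I_n.+1] (fun t => Num.sqrt (Num.sqrt t)).
have qrE k : q.[r k] = Num.sqrt (Num.sqrt (r k)) by rewrite qE // map_f ?mem_enum.
pose T := horner_mx A q.
have TT : T^T = T by rewrite horner_mx_tr AT.
exists (T *m T); split; first by rewrite -{1}TT; exact: psdmx_gram.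
apply: (@map_mx_inj _ _ toC).
  rewrite -[T *m T *m _]/(T * T * (T * T)) /T -!rmorphM /= calcE AcE.
congr (_ *m diag_mx _ *m _); apply/rowP => k; rewrite !mxE !hornerM qrE.
by rewrite -!expr2 sqr_sqrtr ?sqrtr_ge0 // sqr_sqrtr.
Qed.

End Sqrt.
End PsdSqrt.

Section MatrixSquareRoot.
Variable R : realType.
Variable m : nat.

Lemma msqrt_spec (A : 'M[R]_m) : psdmx A -> psdmx (msqrt A) /\ msqrt A *m msqrt A = A.
Proof.
move=> /PsdSqrt.psd_sqrt_exists[S SA].
by have /(xgetPex 0) : exists S, [set S | psdmx S /\ S *m S = A]%classic S by exists S.
Qed.

End MatrixSquareRoot.

Section Covariance.
Context {d : measure_display} {T : measurableType d} {R : realType}.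
Variable P : probability T R.
Local Notation L2 := (Lfun P 2%:E).

Definition cv (F G : T -> R) : R := fine (covariance P F G).

Let L2_L1 F G : F \in L2 -> G \in L2 ->
  [/\ F \in Lfun P 1, G \in Lfun P 1 & (F * G)%R \in Lfun P 1].
Proof.
have L21 H : H \in L2 -> H \in Lfun P 1.
  by apply: Lfun_subset12; exact: fin_num_measure.
by move=> F2 G2; split; [exact: L21 | exact: L21 | exact: Lfun2_mul_Lfun1].
Qed.

Let L2_sum (I : Type) (r : seq I) (F : I -> T -> R) :
  (forall i, F i \in L2) -> \sum_(i <- r) F i \in L2.
Proof.
by move=> F2; apply: rpred_sum => [|? ? _]; [rewrite lee_fin ler1n | exact: F2].
Qed.

Lemma cv_fin_num F G : F \in L2 -> G \in L2 -> covariance P F G \is a fin_num.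
Proof. by move=> F2 G2; have [] := L2_L1 F2 G2; exact: covariance_fin_num. Qed.

Lemma cvE F G : F \in L2 -> G \in L2 ->
  cv F G = Ex P (fun w => F w * G w) - Ex P F * Ex P G.
Proof.
move=> F2 G2; have [F1 G1 FG1] := L2_L1 F2 G2.
rewrite /cv covarianceE // fineB ?fin_numM ?expectation_fin_num // fineM //;
  exact: expectation_fin_num.
Qed.

Lemma cvC F G : cv F G = cv G F.
Proof. by rewrite /cv covarianceC. Qed.

Lemma cv_ge0 F : 0 <= cv F F.
Proof. exact/fine_ge0/variance_ge0. Qed.

Lemma cvZl a F G : F \in L2 -> G \in L2 -> cv (a \o* F) G = a * cv F G.
Proof.
move=> F2 G2; have [F1 G1 FG1] := L2_L1 F2 G2.
by rewrite /cv covarianceZl // fineM // cv_fin_num.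
Qed.

Lemma cv_suml (I : Type) (r : seq I) (F : I -> T -> R) G :
  (forall i, F i \in L2) -> G \in L2 ->
  cv (\sum_(i <- r) F i) G = \sum_(i <- r) cv (F i) G.
Proof.
move=> F2 G2; elim: r => [|i r IH].
  by rewrite !big_nil /cv -[0]/(cst 0 : T -> R) covariance_cst_l.
have Fr2 : \sum_(j <- r) F j \in L2 by apply: L2_sum.
by rewrite !big_cons /cv covarianceDl ?fineD ?cv_fin_num // -IH.
Qed.

(* the covariance matrix of square-integrable variables is PSD: its quadratic form
   at x is the variance of sum_j x_j Z_j *)
Lemma covmx_psd m (Z : 'I_m -> T -> R) : (forall j, Z j \in L2) ->
  psdmx (\matrix_(j, k) cv (Z j) (Z k)).
Proof.
move=> Z2; split=> [|x]; first by apply/matrixP => j k; rewrite !mxE cvC.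
have xZ2 j : x j 0 \o* Z j \in L2 by apply: Lfun_scale; rewrite ?ler1n.
pose f := \sum_(j < m) (x j 0 \o* Z j).
have f2 : f \in L2 by apply: L2_sum.
suff -> : (x^T *m \matrix_(j, k) cv (Z j) (Z k) *m x) 0 0 = cv f f by exact: cv_ge0.
rewrite {1}/f cv_suml // mxE; apply: eq_bigr => k _.
rewrite cvZl // cvC cv_suml // !mxE mulr_suml mulr_sumr; apply: eq_bigr => j _.
by rewrite cvZl // !mxE cvC; ring.
Qed.

(* second-moment matrices are PSD: E[Z Z^T] = Cov(Z) + E[Z] E[Z]^T *)
Lemma moment_mx_psd m (Z : 'I_m -> T -> R) : (forall j, Z j \in L2) ->
  psdmx (\matrix_(j, k) Ex P (fun w => Z j w * Z k w)).
Proof.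
move=> Z2; pose mu : 'rV[R]_m := \row_j Ex P (Z j).
suff -> : \matrix_(j, k) Ex P (fun w => Z j w * Z k w)
    = \matrix_(j, k) cv (Z j) (Z k) + mu^T *m mu.
  by apply: psdmxD; [exact: covmx_psd | exact: psdmx_gram].
apply/matrixP => j k; rewrite !mxE cvE // (bigD1 0) //= big1 => [|i]; last first.
  by rewrite ord1 eqxx.
by rewrite !mxE addr0 subrK.
Qed.

End Covariance.

Section Deterministic.
Variable R : realType.
Variable n : nat.
Implicit Types (A B : 'M[R]_n).

Lemma invmx_mul A B : A \in unitmx -> B \in unitmx ->
  invmx (A *m B) = invmx B *m invmx A.
Proof.
move=> Au Bu; have ABu : A *m B \in unitmx by rewrite unitmx_mul Au Bu.
transitivity (invmx B *m invmx A *m (A *m B *m invmx (A *m B))).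
  by rewrite !mulmxA (mulmxKV Au) (mulVmx Bu) mul1mx.
by rewrite (mulmxV ABu) mulmx1.
Qed.

Lemma anorm_sandwich (Sig W : 'M[R]_n) v : Sig^T = Sig -> W^T = W -> W \in unitmx ->
  anorm (Sig *m invmx (W *m W) *m Sig) v = eucl (invmx W *m Sig *m v).
Proof.
move=> SigT WT Wu; rewrite /anorm invmx_mul // -[eucl _]/(Num.sqrt (sqnorm _)).
rewrite -sqnormE; congr (Num.sqrt (_ 0 0)).
by rewrite !trmx_mul trmx_inv WT SigT !mulmxA.
Qed.

Section Sandwich.
Variables (Sig Sh S W : 'M[R]_n).
Hypotheses (SS : S *m S = Sig) (Su : S \in unitmx) (Wu : W \in unitmx).

Let A := invmx S *m Sh *m invmx S.
Let B := invmx S *m W.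

Lemma Sh_sandwich : Sh = S *m A *m S.
Proof. by rewrite /A !mulmxA (mulmxV Su) mul1mx (mulmxKV Su). Qed.

(* Sh^{-1} - Sig^{-1} = S^{-1} (A^{-1} - 1) S^{-1}, seen in the coordinates W^{-1} *)
Lemma sandwich_identity (z : 'cV[R]_n) : A \in unitmx ->
  invmx W *m Sig *m (invmx Sh *m z - invmx Sig *m z)
    = invmx B *m ((invmx A - 1%:M) *m (B *m (invmx W *m z))).
Proof.
move=> Au; have SAu : S *m A \in unitmx by rewrite unitmx_mul Su Au.
have ShiE : invmx Sh = invmx S *m invmx A *m invmx S.
  by rewrite Sh_sandwich (invmx_mul SAu Su) (invmx_mul Su Au) mulmxA.
have SigiE : invmx Sig = invmx S *m invmx S by rewrite -SS invmx_mul.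
have BiE : invmx B = invmx W *m S by rewrite invmx_mul ?unitmx_inv // invmxK.
rewrite ShiE SigiE -SS BiE /B mulmxBr mulmxBl mul1mx mulmxBr !mulmxA.
by rewrite !(mulmxK Su) !(mulmxK Wu) ?(mulmxK Su).
Qed.

Lemma sandwich_bound (z : 'cV[R]_n) :
  let D := opnorm (invmx S *m Sh *m invmx S - 1%:M) in D < 1 ->
  Sh \in unitmx /\
  eucl (invmx W *m Sig *m (invmx Sh *m z - invmx Sig *m z))
    <= kappa (invmx S *m W) * (D / (1 - D)) * eucl (invmx W *m Sig *m (invmx Sig *m z)).
Proof.
move=> D D1; have Au : A \in unitmx := near_identity_unitmx D1.
split; first by rewrite Sh_sandwich unitmx_mul (unitmx_mul S A) Su Au.
have Sigu : Sig \in unitmx by rewrite -SS unitmx_mul Su.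
rewrite sandwich_identity // -mulmxA (mulKVmx Sigu) /kappa -/B.
have DD : 0 <= D / (1 - D) by rewrite divr_ge0 ?opnorm_ge0 // subr_ge0 ltW.
apply: le_trans (opnorm_bound _ _) _; rewrite -!mulrA.
apply: ler_wpM2l; first exact: opnorm_ge0.
apply: le_trans (near_identity_inv_bound D1 _) _; rewrite -/D.
apply: le_trans (ler_wpM2l DD (opnorm_bound B _)) _.
by rewrite mulrCA !mulrA.
Qed.

End Sandwich.
End Deterministic.

Section Regression.
Context {dT : measure_display} {T : measurableType dT} {R : realType}.
Variable P : probability T R.
Variables (n dim : nat).
Variables (X : 'I_n -> T -> 'cV[R]_dim) (Y : 'I_n -> T -> R).

(* Sigma_n is an average of second-moment matrices *)
Lemma Sigma_n_psd : (forall i j, (fun w => X i w j 0) \in Lfun P 2%:E) ->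
  psdmx (Sigma_n P X).
Proof.
move=> X2; apply: psdmxZ; first by rewrite invr_ge0.
apply: big_ind => [|A B|i _]; [exact: psdmx0 | exact: psdmxD |].
exact: (moment_mx_psd (Z := fun j w => X i w j 0)).
Qed.

(* V_n is the covariance matrix of Zbar *)
Lemma V_n_psd : (forall j, (fun w => Zbar P X Y w j 0) \in Lfun P 2%:E) ->
  psdmx (V_n P X Y).
Proof.
move=> Z2; have -> : V_n P X Y = \matrix_(j, k) cv P (fun w => Zbar P X Y w j 0)
                                                    (fun w => Zbar P X Y w k 0).
  by apply/matrixP => j k; rewrite !mxE cvE.
exact: covmx_psd.
Qed.

Lemma score_Zbar w : Gamma_hat X Y w - Sigma_hat X w *m beta_proj P X Y = Zbar P X Y w.
Proof.
rewrite /Gamma_hat /Sigma_hat /Zbar /resid; set b := beta_proj P X Y.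
rewrite -scalemxAl -scalerBr mulmx_suml -sumrB; congr (_ *: _).
apply: eq_bigr => i _; rewrite scalerBl -mulmxA.
by congr (_ - _); rewrite {1}(mx11_scalar ((X i w)^T *m b)) mul_mx_scalar.
Qed.

Lemma beta_hat_sub w : Sigma_hat X w \in unitmx ->
  beta_hat X Y w - beta_proj P X Y = invmx (Sigma_hat X w) *m Zbar P X Y w.
Proof. by move=> Shu; rewrite -score_Zbar mulmxBr mulKmx. Qed.

Lemma psibar_Zbar w : psibar P X Y w = invmx (Sigma_n P X) *m Zbar P X Y w.
Proof.
rewrite /psibar /Zbar -scalemxAr mulmx_sumr; congr (_ *: _).
by apply: eq_bigr => i _; rewrite /psi scalemxAr.
Qed.

End Regression.

Theorem mainTheorem1 (dT : measure_display) (T : measurableType dT) (R : realType)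
    (P : probability T R) (n dim : nat)
    (X : 'I_n -> T -> 'cV[R]_dim) (Y : 'I_n -> T -> R) :
  (* finite second moments *)
  (forall (i : 'I_n) (j : 'I_dim), (fun w => X i w j 0) \in Lfun P 2%:E) ->
  (forall i : 'I_n, Y i \in Lfun P 2%:E) ->
  (* V_n is well defined (finite): Zbar has square-integrable components *)
  (forall j : 'I_dim, (fun w => Zbar P X Y w j 0) \in Lfun P 2%:E) ->
  Sigma_n P X \in unitmx ->
  V_n P X Y \in unitmx ->
  forall w : T,
  DSigma P X w < 1 ->
  anorm (Sigma_n P X *m invmx (V_n P X Y) *m Sigma_n P X)
        (beta_hat X Y w - beta_proj P X Y - psibar P X Y w)
  <= kappa (minvsqrt (Sigma_n P X) *m msqrt (V_n P X Y))
     * (DSigma P X w / (1 - DSigma P X w))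
     * anorm (Sigma_n P X *m invmx (V_n P X Y) *m Sigma_n P X) (psibar P X Y w).
Proof.
move=> X2 _ Z2 Sigu Vu w D1.
(* Sigma_n and V_n are PSD, so msqrt yields symmetric square roots S and W *)
have Sigpsd := Sigma_n_psd X2; have [SigT _] := Sigpsd.
have [_ SS] := msqrt_spec Sigpsd.
have [[WT _] WW] := msqrt_spec (V_n_psd Z2).
have Su : msqrt (Sigma_n P X) \in unitmx.
  by move: Sigu; rewrite -{1}SS unitmx_mul => /andP[].
have Wu : msqrt (V_n P X Y) \in unitmx.
  by move: Vu; rewrite -{1}WW unitmx_mul => /andP[].
have [Shu bound] :=
  sandwich_bound (Sh := Sigma_hat X w) SS Su Wu (Zbar P X Y w) D1.
(* both sides are Euclidean norms in the coordinates W^{-1} Sigma_n *)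
by rewrite beta_hat_sub // psibar_Zbar -[in invmx (V_n P X Y)]WW !anorm_sandwich.
Qed.
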